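(* Assume that (CVOP) has a solution, and let $\bar S\subseteq S_a$ be a solution of the associated projection (Pv) satisfying $Y_a=\operatorname{conv}\operatorname{proj}_y[\bar S]$. Then $\bar X:=\{x:(x,y)\in\bar S,\ y\notin\Gamma[\mathcal{X}]+(C\setminus\{0\})\}$ is a solution of (CVOP).
   Context: (CVOP): $\min\Gamma(x)$ w.r.t. $\le_C$ s.t. $x\in\mathcal{X}$, with $C\subseteq\mathbb{R}^m$ a non-trivial pointed solid convex cone, $\mathcal{X}\subseteq\mathbb{R}^n$ convex, $\Gamma$ $C$-convex; upper image $\mathcal{G}=\operatorname{cl}(\Gamma[\mathcal{X}]+C)$. $\bar x\in\mathcal{X}$ is a minimizer if $(\Gamma(\bar x)-C\setminus\{0\})\cap\Gamma[\mathcal{X}]=\emptyset$. $\bar X\subseteq\mathcal{X}$ is an infimizer if $\mathcal{G}=\operatorname{cl}\operatorname{conv}(\Gamma[\bar X]+C)$, and a solution if it is an infimizer consisting of minimizers only. $S_a=\{(x,y):x\in\mathcal{X},y\in\Gamma(x)+C\}$, $Y_a=\operatorname{proj}_y[S_a]$, and $\bar S\subseteq S_a$ is a solution of (Pv) if $Y_a\subseteq\operatorname{cl}\operatorname{conv}\operatorname{proj}_y[\bar S]$. *)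

(* Vectors of R^k are row vectors 'rV[R]_k
   over an abstract R : realType, with the (canonical, product = Euclidean)
   topology on matrices provided by MathComp-Analysis. *)
From mathcomp Require Import all_boot all_order all_algebra.
From mathcomp Require Import all_classical all_reals all_analysis.
Import numFieldNormedType.Exports.
Import Order.TTheory GRing.Theory Num.Theory.
Set Implicit Arguments. Unset Strict Implicit. Unset Printing Implicit Defensive.
Local Open Scope classical_set_scope.
Local Open Scope ring_scope.

Definition mink_sum (R : realType) (k : nat) (A B : set 'rV[R]_k) : set 'rV[R]_k :=
  [set z | exists a b, A a /\ B b /\ z = a + b].

Definition cvx_hull (R : realType) (k : nat) (A : set 'rV[R]_k) : set 'rV[R]_k :=
  [set z | exists (p : nat) (l : 'I_p -> R) (a : 'I_p -> 'rV[R]_k),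
     (forall i, 0 <= l i) /\ \sum_(i < p) l i = 1 /\ (forall i, A (a i)) /\
     z = \sum_(i < p) l i *: a i].

Definition cvx_set (R : realType) (k : nat) (A : set 'rV[R]_k) : Prop :=
  forall x y (t : R), A x -> A y -> 0 <= t <= 1 -> A (t *: x + (1 - t) *: y).

Definition is_cone (R : realType) (k : nat) (C : set 'rV[R]_k) : Prop :=
  forall x (t : R), C x -> 0 <= t -> C (t *: x).

Definition convex_cone (R : realType) (k : nat) (C : set 'rV[R]_k) : Prop :=
  is_cone C /\ cvx_set C.

Definition pointed_cone (R : realType) (k : nat) (C : set 'rV[R]_k) : Prop :=
  forall x, C x -> C (- x) -> x = 0.

Definition solid_set (R : realType) (k : nat) (C : set 'rV[R]_k) : Prop :=
  exists x, (interior C) x.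

Definition nontrivial_cone (R : realType) (k : nat) (C : set 'rV[R]_k) : Prop :=
  C <> [set 0] /\ C <> setT.

Definition leC (R : realType) (k : nat) (C : set 'rV[R]_k) (y1 y2 : 'rV[R]_k) : Prop :=
  C (y2 - y1).

Definition C_convex (R : realType) (n m : nat) (C : set 'rV[R]_m)
  (X : set 'rV[R]_n) (G : 'rV[R]_n -> 'rV[R]_m) : Prop :=
  forall x y (t : R), X x -> X y -> 0 <= t <= 1 ->
    leC C (G (t *: x + (1 - t) *: y)) (t *: G x + (1 - t) *: G y).

Definition Cnz (R : realType) (k : nat) (C : set 'rV[R]_k) : set 'rV[R]_k :=
  [set c | C c /\ c <> 0].

Definition upper_image (R : realType) (n m : nat) (C : set 'rV[R]_m)
  (X : set 'rV[R]_n) (G : 'rV[R]_n -> 'rV[R]_m) : set 'rV[R]_m :=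
  closure (mink_sum (G @` X) C).

Definition minimizer (R : realType) (n m : nat) (C : set 'rV[R]_m)
  (X : set 'rV[R]_n) (G : 'rV[R]_n -> 'rV[R]_m) (xb : 'rV[R]_n) : Prop :=
  X xb /\ ~ (exists y, (exists c, Cnz C c /\ y = G xb - c) /\ (G @` X) y).

Definition infimizer (R : realType) (n m : nat) (C : set 'rV[R]_m)
  (X : set 'rV[R]_n) (G : 'rV[R]_n -> 'rV[R]_m) (Xb : set 'rV[R]_n) : Prop :=
  Xb `<=` X /\ upper_image C X G = closure (cvx_hull (mink_sum (G @` Xb) C)).

Definition cvop_solution (R : realType) (n m : nat) (C : set 'rV[R]_m)
  (X : set 'rV[R]_n) (G : 'rV[R]_n -> 'rV[R]_m) (Xb : set 'rV[R]_n) : Prop :=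
  infimizer C X G Xb /\ (forall x, Xb x -> minimizer C X G x).

Definition S_a (R : realType) (n m : nat) (C : set 'rV[R]_m)
  (X : set 'rV[R]_n) (G : 'rV[R]_n -> 'rV[R]_m) : set ('rV[R]_n * 'rV[R]_m) :=
  [set p | X p.1 /\ mink_sum [set G p.1] C p.2].

Definition Y_a (R : realType) (n m : nat) (C : set 'rV[R]_m)
  (X : set 'rV[R]_n) (G : 'rV[R]_n -> 'rV[R]_m) : set 'rV[R]_m :=
  snd @` S_a C X G.

Definition pv_solution (R : realType) (n m : nat) (C : set 'rV[R]_m)
  (X : set 'rV[R]_n) (G : 'rV[R]_n -> 'rV[R]_m)
  (Sb : set ('rV[R]_n * 'rV[R]_m)) : Prop :=
  Sb `<=` S_a C X G /\ Y_a C X G `<=` closure (cvx_hull (snd @` Sb)).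

From mathcomp Require Import all_boot all_order all_algebra.
From mathcomp Require Import all_classical all_reals all_analysis.
From mathcomp Require Import ring lra.
Import numFieldNormedType.Exports.
Import Order.TTheory GRing.Theory Num.Theory.
Set Implicit Arguments.
Unset Strict Implicit.
Local Open Scope classical_set_scope.
Local Open Scope ring_scope.

(* Let M = Γ[X] + C and let D = Γ[X] + (C \ {0}) be the set of dominated
   points; X̄ collects the x with (x, y) ∈ S̄ and y ∉ D.
   1. Convex hulls: cvx_hull A is the least convex superset of A, and a convex
      combination lies in cvx_hull B as soon as its points of nonzero weight do.
   2. Cones: a convex cone is closed under addition, and for a pointed one
      C + (C \ {0}) ⊆ C \ {0}.  Hence M is convex (Γ is C-convex, X convex).
   3. Minimality of X̄: if y = Γ(x) + b ∉ D then x is a minimizer.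
   4. If x is a minimizer and Γ(x) = Σ λ_i y_i with y_i ∈ M, then every y_i
      of nonzero weight is nondominated (replacing y_i by its "Γ-part" would
      exhibit a point of Γ[X] strictly below Γ(x)).
   5. Infimizer: cl(M) = cl conv(Γ[X̄] + C).  "⊇" as M is convex and contains
      Γ[X̄] + C.  "⊆": by the assumed solution X_b, it suffices that
      Γ(x) + c ∈ conv(Γ[X̄] + C) for minimizers x; write Γ(x) ∈ Y_a = conv
      proj_y[S̄] and use 4 to see that the points of nonzero weight, shifted
      by c, lie in Γ[X̄] + C. *)

Section ConvexHull.
Variables (R : realType) (k : nat).
Implicit Types (A B K : set 'rV[R]_k).

Lemma cvx_hullK A K : cvx_set K -> A `<=` K -> cvx_hull A `<=` K.
Proof.
move=> cK AK z [p [l [a [l0 [l1 [Aa ->]]]]]].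
elim: p l a l0 l1 Aa => [|p IH] l a l0 l1 Aa.
  by move: l1; rewrite big_ord0 => /eqP; rewrite eq_sym oner_eq0.
rewrite big_ord_recl in l1; rewrite big_ord_recl.
set s := \sum_(i < p) l (lift ord0 i) in l1.
have s0 : 0 <= s by apply: sumr_ge0 => i _.
have l0E : l ord0 = 1 - s by rewrite -l1 addrK.
have [s_eq0|s_neq0] := eqVneq s 0.
  have tail0 i : l (lift ord0 i) = 0.
    by apply: (psumr_eq0P (P := predT) _ s_eq0) => // j _.
  rewrite big1 ?addr0; last by move=> i _; rewrite tail0 scale0r.
  by rewrite l0E s_eq0 subr0 scale1r; apply: AK.
(* The tail, renormalized by s, is a convex combination of length p. *)
have K_tail : K (\sum_(i < p) (l (lift ord0 i) / s) *: a (lift ord0 i)).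
  apply: IH => [i||i]; last exact: Aa.
  - by rewrite divr_ge0.
  - by rewrite -mulr_suml divff.
have -> : \sum_(i < p) l (lift ord0 i) *: a (lift ord0 i) =
          s *: \sum_(i < p) (l (lift ord0 i) / s) *: a (lift ord0 i).
  rewrite scaler_sumr; apply: eq_bigr => i _.
  by rewrite scalerA mulrCA divff ?mulr1.
have := cK (a ord0) _ (1 - s) (AK _ (Aa ord0)) K_tail.
rewrite (_ : 1 - (1 - s) = s); last by ring.
have := l0 ord0; rewrite -l0E => l00; apply; apply/andP; split; lra.
Qed.

(* The convex hull is convex: concatenate the two combinations. *)
Lemma cvx_hull_cvx A : cvx_set (cvx_hull A).
Proof.
move=> x y t [p [l [a [l0 [l1 [Aa ->]]]]]]
  [q [l' [a' [l0' [l1' [Aa' ->]]]]]] /andP[t0 t1].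
exists (p + q)%N,
  (fun i => match fintype.split i with inl j => t * l j | inr j => (1 - t) * l' j end),
  (fun i => match fintype.split i with inl j => a j | inr j => a' j end).
have splitl (j : 'I_p) : fintype.split (lshift q j) = inl j by exact: (unsplitK (inl j)).
have splitr (j : 'I_q) : fintype.split (rshift p j) = inr j by exact: (unsplitK (inr j)).
split; [|split; [|split]].
- by move=> i; case: (fintype.split i) => j; apply: mulr_ge0 => //; lra.
- rewrite big_split_ord /=.
  under eq_bigr do rewrite splitl.
  under [X in _ + X]eq_bigr do rewrite splitr.
  by rewrite -!mulr_sumr l1 l1' !mulr1 addrC subrK.
- by move=> i; case: (fintype.split i).
- symmetry; rewrite big_split_ord /=.
  under eq_bigr do rewrite splitl.
  under [X in _ + X = _]eq_bigr do rewrite splitr.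
  by rewrite !scaler_sumr; congr (_ + _); apply: eq_bigr => i _; rewrite scalerA.
Qed.

Lemma cvx_hull_support B p (l : 'I_p -> R) (a : 'I_p -> 'rV[R]_k) :
  (forall i, 0 <= l i) -> \sum_(i < p) l i = 1 ->
  (forall i, l i != 0 -> B (a i)) -> cvx_hull B (\sum_(i < p) l i *: a i).
Proof.
move=> l0 l1 Ba.
have [j0 lj0] : exists j, l j != 0.
  apply: contrapT => /forallNP l_eq0; move/eqP: (@oner_neq0 R); apply.
  by rewrite -l1 big1 // => j _; apply/eqP/negbNE/negP/l_eq0.
pose a' i := if l i == 0 then a j0 else a i.
exists p, l, a'; split; [done | split; [done | split]].
  by move=> i; rewrite /a'; case: eqP => [_|/eqP]; apply: Ba.
by apply: eq_bigr => i _; rewrite /a'; case: eqP => // ->; rewrite !scale0r.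
Qed.

Lemma cvx_comb_translate p (l : 'I_p -> R) (a : 'I_p -> 'rV[R]_k) c :
  \sum_(i < p) l i = 1 ->
  \sum_(i < p) l i *: (a i + c) = \sum_(i < p) l i *: a i + c.
Proof.
move=> l1; under eq_bigr do rewrite scalerDr.
by rewrite big_split /= -scaler_suml l1 scale1r.
Qed.

Lemma cvx_comb_replace p (l : 'I_p -> R) (a : 'I_p -> 'rV[R]_k) i v :
  \sum_(j < p) l j *: a j =
  \sum_(j < p) l j *: (if j == i then v else a j) + l i *: (a i - v).
Proof.
rewrite (bigD1 i) //= [in RHS](bigD1 i) //= eqxx.
rewrite [in RHS]addrAC -scalerDr [v + _]addrC subrK; congr (_ + _).
by apply: eq_bigr => j /negPf ->.
Qed.

End ConvexHull.

Section Cones.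
Variables (R : realType) (k : nat) (C : set 'rV[R]_k).
Hypothesis hC : convex_cone C.

Lemma cone0 c : C c -> C 0.
Proof. by move=> Cc; have := hC.1 c 0 Cc (lexx 0); rewrite scale0r. Qed.

(* A convex cone is closed under addition: a + b = 2 (a/2 + b/2). *)
Lemma cone_add a b : C a -> C b -> C (a + b).
Proof.
move=> Ca Cb.
have half01 : 0 <= (2^-1 : R) <= 1 by apply/andP; split; lra.
have := hC.1 _ 2 (hC.2 a b _ Ca Cb half01) ltac:(lra).
rewrite (_ : 1 - 2^-1 = 2^-1 :> R); last by field.
by rewrite scalerDr !scalerA divff ?pnatr_eq0 // !scale1r.
Qed.

Hypothesis hCp : pointed_cone C.

Lemma Cnz_addl a b : C a -> Cnz C b -> Cnz C (a + b).
Proof.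
move=> Ca [Cb b_neq0]; split; first exact: cone_add.
move=> /eqP; rewrite addr_eq0 => /eqP aE; apply: b_neq0.
by apply: hCp => //; rewrite -aE.
Qed.

Lemma Cnz_scale (t : R) e : t != 0 -> 0 <= t -> Cnz C e -> Cnz C (t *: e).
Proof.
move=> t_neq0 t0 [Ce e_neq0]; split; first exact: hC.1.
by move/eqP; rewrite scaler_eq0 (negPf t_neq0) => /eqP.
Qed.

End Cones.

Section UpperSet.
Variables (R : realType) (n m : nat) (C : set 'rV[R]_m).
Variables (X : set 'rV[R]_n) (G : 'rV[R]_n -> 'rV[R]_m).
Hypotheses (hC : convex_cone C) (hCp : pointed_cone C).

Local Notation M := (mink_sum (G @` X) C).
Local Notation dominated := (mink_sum (G @` X) (Cnz C)).

Lemma upper_set_cvx : cvx_set X -> C_convex C X G -> cvx_set M.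
Proof.
move=> hX hG y1 y2 t [_ [c1 [[x1 Xx1 <-] [Cc1 ->]]]]
  [_ [c2 [[x2 Xx2 <-] [Cc2 ->]]]] t01.
set xt := t *: x1 + (1 - t) *: x2.
exists (G xt), ((t *: G x1 + (1 - t) *: G x2 - G xt) + (t *: c1 + (1 - t) *: c2)).
split; first by exists xt => //; apply: hX.
split; first by apply: cone_add => //; [exact: hG | exact: hC.2].
by rewrite addrA (addrC (G xt)) subrK !scalerDr addrACA.
Qed.

Lemma S_a_upper pr : S_a C X G pr -> M pr.2.
Proof.
by move=> [Xx [_ [b [-> [Cb ->]]]]]; exists (G pr.1), b; split => //; exists pr.1.
Qed.

Lemma nondominated_minimizer x b :
  X x -> C b -> ~ dominated (G x + b) -> minimizer C X G x.
Proof.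
move=> Xx Cb nd; split=> // -[_ [[c [Cc ->]] [u Xu Gu]]]; apply: nd.
exists (G u), (b + c); split; first by exists u.
split; first exact: Cnz_addl.
by rewrite Gu addrCA subrK addrC.
Qed.

Lemma minimizer_comb_nondominated x p (l : 'I_p -> R) (ys : 'I_p -> 'rV[R]_m) :
  cvx_set M -> minimizer C X G x ->
  (forall i, 0 <= l i) -> \sum_(i < p) l i = 1 -> (forall i, M (ys i)) ->
  G x = \sum_(i < p) l i *: ys i ->
  forall i, l i != 0 -> ~ dominated (ys i).
Proof.
move=> Mcvx [_ xmin] l0 l1 Mys Gx i li [_ [e [[z Xz <-] [Ce ysE]]]].
set ys' := fun j => if j == i then G z else ys j.
have Mw : M (\sum_(j < p) l j *: ys' j).
  apply: (cvx_hullK Mcvx (@subset_refl _ M) _); exists p, l, ys'.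
  split; [done | split; [done | split=> // j]].
  rewrite /ys'; case: eqP => _; last exact: Mys.
  exists (G z), 0; split; first by exists z.
  by split; [exact: (cone0 hC (proj1 Ce)) | rewrite addr0].
have Gx_split : G x = \sum_(j < p) l j *: ys' j + l i *: e.
  by rewrite Gx (cvx_comb_replace _ _ i (G z)) ysE [G z + e]addrC addrK.
have [_ [f [[u Xu <-] [Cf wE]]]] := Mw.
apply: xmin; exists (G u); split; last by exists u.
exists (f + l i *: e); split; first by apply: Cnz_addl => //; exact: Cnz_scale.
by rewrite Gx_split wE -[_ + f + _]addrA addrK.
Qed.

End UpperSet.

Section Projection.
Variables (R : realType) (n m : nat) (C : set 'rV[R]_m).
Variables (X : set 'rV[R]_n) (G : 'rV[R]_n -> 'rV[R]_m).
Variable Sb : set ('rV[R]_n * 'rV[R]_m).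
Hypotheses (hC : convex_cone C) (hCp : pointed_cone C).
Hypothesis hSb : Sb `<=` S_a C X G.

Local Notation dominated := (mink_sum (G @` X) (Cnz C)).
Local Notation Xbar := [set x | exists y, Sb (x, y) /\ ~ dominated y].

Lemma Xbar_sub : Xbar `<=` X.
Proof. by move=> x [y [/hSb [] //]]. Qed.

Lemma Xbar_minimizers x : Xbar x -> minimizer C X G x.
Proof.
move=> [y [Sxy nd]]; have [Xx [_ [b [/= -> [Cb yE]]]]] := hSb Sxy.
by apply: (nondominated_minimizer hC hCp Xx Cb); rewrite -yE.
Qed.

Lemma nondominated_shift x y c :
  Sb (x, y) -> ~ dominated y -> C c -> mink_sum (G @` Xbar) C (y + c).
Proof.
move=> Sxy nd Cc; have [_ [a [b [/= aE [Cb yE]]]]] := hSb Sxy.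
exists (G x), (b + c); split; first by exists x => //; exists y.
by split; [exact: cone_add | rewrite yE aE addrA].
Qed.

End Projection.

Theorem mainTheorem14 (R : realType) (n m : nat) (C : set 'rV[R]_m)
  (X : set 'rV[R]_n) (G : 'rV[R]_n -> 'rV[R]_m)
  (hCnt : nontrivial_cone C) (hCcc : convex_cone C) (hCp : pointed_cone C)
  (hCs : solid_set C) (hX : cvx_set X) (hG : C_convex C X G)
  (hsol : exists Xb, cvop_solution C X G Xb)
  (Sb : set ('rV[R]_n * 'rV[R]_m))
  (hSb : pv_solution C X G Sb)
  (hY : Y_a C X G = cvx_hull (snd @` Sb)) :
  cvop_solution C X G
    [set x | exists y, Sb (x, y) /\ ~ mink_sum (G @` X) (Cnz C) y].
Proof.
have [SbS _] := hSb.
have Mcvx := upper_set_cvx hCcc hX hG.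
have C0 : C 0 by case: hCs => c /interior_subset; apply: cone0.
split; last by move=> x; apply: Xbar_minimizers.
split; first exact: Xbar_sub.
apply/seteqP; split; last first.
  apply: closureS; apply: (cvx_hullK Mcvx) => _ [_ [c [[x Xx <-] [Cc ->]]]].
  by exists (G x), c; split => //; exists x => //; apply: (Xbar_sub SbS).
have [Xb [[_ ->] Xbmin]] := hsol.
apply: closureS; apply: cvx_hullK; first exact: cvx_hull_cvx.
move=> _ [_ [c [[x Xbx <-] [Cc ->]]]].
have GxY : Y_a C X G (G x).
  exists (x, G x) => //; split; first exact: (Xbmin x Xbx).1.
  by exists (G x), 0; rewrite addr0.
move: GxY; rewrite hY => -[p [l [ys [l0 [l1 [Sys Gx]]]]]].
have Mys i : mink_sum (G @` X) C (ys i).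
  by have [pr /SbS Spr <-] := Sys i; apply: S_a_upper.
rewrite Gx -cvx_comb_translate //; apply: cvx_hull_support => // i li.
have [[xi yi] Spr /= yiE] := Sys i; subst yi.
apply: (nondominated_shift hCcc SbS Spr _ Cc).
exact: (minimizer_comb_nondominated hCcc hCp Mcvx (Xbmin x Xbx) l0 l1 Mys Gx li).
Qed.
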